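(* Let $\mathcal{A}$ be a finite alphabet, $\mathbf{p}=(p_0,p_1)$ an irreducible pair on $\mathcal{A}$, and $\mathbf{q}=(p_1,p_0)$. Then $\mathcal{S}(\mathbf{q})=\mathcal{S}(\mathbf{p})^{-1}$.
   Context: Let $n=\#\mathcal{A}$. A pair is $\mathbf{p}=(p_0,p_1)$ with $p_0,p_1:\mathcal{A}\to\{1,\dots,n\}$ bijections; it is irreducible if $p_0^{-1}\{1,\dots,k\}\ne p_1^{-1}\{1,\dots,k\}$ for $1\le k<n$ (so $(p_1,p_0)$ is irreducible whenever $(p_0,p_1)$ is). For irreducible $\mathbf{p}$, $\mathcal{S}(\mathbf{p}):\mathcal{A}\to\mathcal{A}$ is defined by $\mathcal{S}(\mathbf{p})(\alpha)=p_0^{-1}(1)$ if $p_1(\alpha)=1$; $=p_0^{-1}(p_0(p_1^{-1}(n))+1)$ if $p_1(\alpha)=p_1(p_0^{-1}(n))+1$; $=p_0^{-1}(p_0(p_1^{-1}(p_1(\alpha)-1))+1)$ otherwise. It is a permutation of $\mathcal{A}$. *)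

From mathcomp Require Import all_boot.
Set Implicit Arguments. Unset Strict Implicit. Unset Printing Implicit Defensive.

(* Positions are 1-based naturals in {1, ..., n}, n = #|A|, as in the paper. *)
Definition is_pos_bij (A : finType) (p : A -> nat) : Prop :=
  injective p /\ forall a, 1 <= p a <= #|A|.

Definition is_pair (A : finType) (p0 p1 : A -> nat) : Prop :=
  is_pos_bij p0 /\ is_pos_bij p1.

Definition irreducible (A : finType) (p0 p1 : A -> nat) : Prop :=
  forall k, 1 <= k < #|A| ->
    [set a | p0 a <= k] != [set a | p1 a <= k].

(* p^{-1}(k), with a default value d used only if k is not in the range *)
Definition pinv (A : finType) (p : A -> nat) (d : A) (k : nat) : A :=
  odflt d [pick a | p a == k].

Definition Smap (A : finType) (p0 p1 : A -> nat) (alpha : A) : A :=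
  let n := #|A| in
  let inv0 := pinv p0 alpha in
  let inv1 := pinv p1 alpha in
  if p1 alpha == 1 then inv0 1
  else if p1 alpha == (p1 (inv0 n)).+1 then inv0 (p0 (inv1 n)).+1
  else inv0 (p0 (inv1 (p1 alpha).-1)).+1.

From mathcomp Require Import all_boot.
From mathcomp Require Import zify.

Set Implicit Arguments.
Unset Strict Implicit.
Unset Printing Implicit Defensive.

(* The graph of S(p) is the relation [Sgraph p0 p1]: a is sent to b when,
   for some letter c, a comes right after c in p1 and b right after c in p0,
   except that the p1-first letter goes to the p0-first letter and the
   p1-successor of the p0-last letter goes to the p0-successor of the p1-last
   letter. Exchanging p0 and p1 transposes this relation, and it is functional
   as soon as p0 and p1 are injective. So S(q) inverts S(p) once S(p) is known
   to lie on the graph, which is where surjectivity and irreducibility (the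
   p0-last and p1-last letters differ) come in. *)

Section PositionBijection.
Variables (A : finType) (p : A -> nat).
Hypothesis hp : is_pos_bij p.

Lemma pos_bij_surj k : 1 <= k <= #|A| -> exists a, p a = k.
Proof.
have [p_inj p_range] := hp.
have p_enum_uniq : uniq (map p (enum A)) by rewrite map_inj_uniq ?enum_uniq.
have p_enum_sub : {subset map p (enum A) <= iota 1 #|A|}.
  by move=> _ /mapP[a _ ->]; rewrite mem_iota; have := p_range a; lia.
have [|_ p_enum_iota] := uniq_min_size p_enum_uniq p_enum_sub.
  by rewrite size_iota size_map -cardE.
move=> k_range; have : k \in iota 1 #|A| by rewrite mem_iota; lia.
by rewrite -p_enum_iota => /mapP[a _ ->]; exists a.
Qed.

Lemma p_pinv d k : 1 <= k <= #|A| -> p (pinv p d k) = k.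
Proof.
move=> k_range; rewrite /pinv; case: pickP => [a /eqP // | no_preim].
by have [a pa] := pos_bij_surj k_range; move: (no_preim a); rewrite pa eqxx.
Qed.

Lemma pos_bij_le_pred a b : p a = #|A| -> (p b <= #|A|.-1) = (b != a).
Proof.
have [p_inj p_range] := hp; move=> pa.
have := p_range b; case: (eqVneq b a) => [-> | ne_ba]; first by lia.
have : p b != p a by rewrite (inj_eq p_inj).
by lia.
Qed.

End PositionBijection.

Lemma irreducible_last (A : finType) (p0 p1 : A -> nat) a :
  is_pair p0 p1 -> irreducible p0 p1 -> 1 < #|A| ->
  p0 a = #|A| -> p1 a != #|A|.
Proof.
move=> [h0 h1] hirr n_gt1 p0a; apply/eqP => p1a.
have k_range : 1 <= #|A|.-1 < #|A| by lia.
move/eqP: (hirr _ k_range); apply; apply/setP => b; rewrite !inE.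
by rewrite (pos_bij_le_pred h0 _ p0a) (pos_bij_le_pred h1 _ p1a).
Qed.

Lemma is_pair_sym (A : finType) (p0 p1 : A -> nat) :
  is_pair p0 p1 -> is_pair p1 p0.
Proof. by case. Qed.

Lemma irreducible_sym (A : finType) (p0 p1 : A -> nat) :
  irreducible p0 p1 -> irreducible p1 p0.
Proof. by move=> hirr k k_range; rewrite eq_sym hirr. Qed.

Definition Sgraph (A : finType) (p0 p1 : A -> nat) (a b : A) : Prop :=
  [\/ p1 a = 1 /\ p0 b = 1,
      exists l0 l1, [/\ p0 l0 = #|A|, p1 l1 = #|A|,
                        p1 a = (p1 l0).+1 & p0 b = (p0 l1).+1]
    | exists c, p1 a = (p1 c).+1 /\ p0 b = (p0 c).+1].

Lemma Sgraph_sym (A : finType) (p0 p1 : A -> nat) a b :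
  Sgraph p0 p1 a b -> Sgraph p1 p0 b a.
Proof.
case=> [[? ?] | [l0 [l1 [? ? ? ?]]] | [c [? ?]]].
- by constructor 1.
- by constructor 2; exists l1, l0.
- by constructor 3; exists c.
Qed.

Lemma Sgraph_functional (A : finType) (p0 p1 : A -> nat) a b b' :
  is_pair p0 p1 -> Sgraph p0 p1 a b -> Sgraph p0 p1 a b' -> b = b'.
Proof.
move=> [[p0_inj p0_range] [p1_inj p1_range]].
case=> [[a1 b1] | [l0 [l1 [l0n l1n al0 bl1]]] | [c [ac bc]]];
  case=> [[a1' b1'] | [l0' [l1' [l0n' l1n' al0' bl1']]] | [c' [ac' bc']]];
  apply: p0_inj.
- by rewrite b1 b1'.
- by have := p1_range l0'; lia.
- by have := p1_range c'; lia.
- by have := p1_range l0; lia.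
- by rewrite bl1 bl1' (p1_inj l1 l1') // l1n.
- have /p1_inj c'l0 : p1 c' = p1 l0 by lia.
  by have := p0_range b'; rewrite bc' c'l0 l0n; lia.
- by have := p1_range c; lia.
- have /p1_inj cl0 : p1 c = p1 l0' by lia.
  by have := p0_range b; rewrite bc cl0 l0n'; lia.
- have /p1_inj cc' : p1 c = p1 c' by lia.
  by rewrite bc bc' cc'.
Qed.

Lemma Smap_Sgraph (A : finType) (p0 p1 : A -> nat) a :
  is_pair p0 p1 -> irreducible p0 p1 -> Sgraph p0 p1 a (Smap p0 p1 a).
Proof.
move=> hp hirr; have [h0 h1] := hp.
have [p0_inj p0_range] := h0; have [_ p1_range] := h1; have := p1_range a.
rewrite /Smap; set n := #|A| => a_range.
case: ifP => [/eqP a1 | /eqP a_ne1].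
  by constructor 1; split; rewrite // p_pinv //; lia.
set l0 := pinv p0 a n; set l1 := pinv p1 a n.
have l0n : p0 l0 = n by rewrite p_pinv //; lia.
have l1n : p1 l1 = n by rewrite p_pinv //; lia.
case: ifP => [/eqP al0 | /eqP a_nl0].
  have n_gt1 : 1 < n by have := p1_range l0; lia.
  have l1_not_last : p0 l1 != n.
    by apply/eqP => /(irreducible_last hp hirr n_gt1); rewrite l1n eqxx.
  constructor 2; exists l0, l1; split=> //.
  by rewrite p_pinv //; have := p0_range l1; lia.
set c := pinv p1 a (p1 a).-1.
have ca : p1 c = (p1 a).-1 by rewrite p_pinv //; lia.
have c_not_last : p0 c != n.
  apply/eqP => c_last; apply: a_nl0.
  have -> : l0 = c by apply: p0_inj; rewrite l0n c_last.
  lia.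
constructor 3; exists c; split; first by lia.
by rewrite p_pinv //; have := p0_range c; lia.
Qed.

Lemma Smap_cancel (A : finType) (p0 p1 : A -> nat) :
  is_pair p0 p1 -> irreducible p0 p1 -> cancel (Smap p0 p1) (Smap p1 p0).
Proof.
move=> hp hirr a; have hq := is_pair_sym hp; have hirr_q := irreducible_sym hirr.
apply: (Sgraph_functional hq (Smap_Sgraph _ hq hirr_q)).
exact: Sgraph_sym (Smap_Sgraph _ hp hirr).
Qed.

Theorem lemma2p9 (A : finType) (p0 p1 : A -> nat) :
  is_pair p0 p1 -> irreducible p0 p1 ->
  cancel (Smap p0 p1) (Smap p1 p0) /\ cancel (Smap p1 p0) (Smap p0 p1).
Proof.
move=> hp hirr; split; first exact: Smap_cancel.
exact: Smap_cancel (is_pair_sym hp) (irreducible_sym hirr).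
Qed.
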